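(* Let $c\in[\frac12,1)$ and let $d,\delta$ be positive integers with $d\ge\delta$. Let $G$ be a graph with maximum degree $\delta$ and $w:V(G)\to[0,1]$ a weight function with $w(V(G))=1$, and assume $G$ has no $d$-bounded $(w,c)$-balanced separator. Fix a bijection $\mathcal{O}:V(G)\to\{1,\dots,|V(G)|\}$. Then the relation $\le_A$ is a partial order on $V(G)$.
   Context: For $X\subseteq V(G)$, $w(X)=\sum_{x\in X}w(x)$; $N[v]=N(v)\cup\{v\}$; $N^d[v]$ is the set of vertices at distance at most $d$ from $v$. A set $X$ is $d$-bounded if $X\subseteq N^d[v]$ for some $v$. $X$ is a $(w,c)$-balanced separator if every connected component $D$ of $G\setminus X$ has $w(D)\le c$. For $v\in V(G)$, the canonical star separation $S_v=(A_v,C_v,B_v)$ is: $B_v$ the (under these assumptions unique) largest-weight connected component of $G\setminus N[v]$, $C_v$ the set consisting of $v$ and every vertex of $N(v)$ with a neighbor in $B_v$, and $A_v=V(G)\setminus(B_v\cup C_v)$. Two vertices $u,v$ are star twins if $B_u=B_v$, $C_u\setminus\{u\}=C_v\setminus\{v\}$ and $A_u\setminus\{v\}=A_v\setminus\{u\}$. The relation $\le_A$ is defined by: $x\le_A y$ if $x=y$, or $x,y$ are star twins and $\mathcal{O}(x)<\mathcal{O}(y)$, or $x,y$ are not star twins and $y\in A_x$. *)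

From HB Require Import structures.
From mathcomp Require Import all_boot all_order all_algebra.
Set Implicit Arguments. Unset Strict Implicit. Unset Printing Implicit Defensive.
Import Order.TTheory GRing.Theory Num.Theory.
Local Open Scope ring_scope.

Section Graph.
Variables (T : finType) (e : rel T).

Definition simple_graph := symmetric e /\ irreflexive e.

Definition nbhd (v : T) : {set T} := [set u | e v u].
Definition cnbhd (v : T) : {set T} := v |: nbhd v.

Definition max_degree (k : nat) :=
  (forall v, #|nbhd v| <= k)%N /\ exists v, #|nbhd v| = k.

Fixpoint ball (k : nat) (v : T) : {set T} :=
  match k with
  | 0 => [set v]
  | k'.+1 => ball k' v :|: [set u | [exists x in ball k' v, e x u]]
  end.

Definition bounded (k : nat) (X : {set T}) := exists v, X \subset ball k v.

Definition del_rel (X : {set T}) : rel T :=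
  fun x y => [&& e x y, x \notin X & y \notin X].

Definition components (X : {set T}) : {set {set T}} :=
  [set [set y | connect (del_rel X) x y] | x in ~: X].

Variable R : realFieldType.
Variable w : T -> R.

Definition wt (X : {set T}) : R := \sum_(x in X) w x.

Definition balanced_sep (c : R) (X : {set T}) :=
  forall D, D \in components X -> wt D <= c.

(* B_v : a largest-weight component of G \ N[v] (set0 if there is none);
   under the standing assumptions it is unique *)
Definition Bv (v : T) : {set T} :=
  let CC := components (cnbhd v) in
  match [pick C in CC | [forall C' in CC, wt C' <= wt C]] with
  | Some C => C
  | None => set0
  end.

Definition Cv (v : T) : {set T} :=
  v |: [set u in nbhd v | [exists b in Bv v, e u b]].

Definition Av (v : T) : {set T} := ~: (Bv v :|: Cv v).

Definition star_twins (u v : T) : bool :=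
  [&& Bv u == Bv v, Cv u :\ u == Cv v :\ v & Av u :\ v == Av v :\ u].

Variable O : T -> nat.

Definition leA (x y : T) : bool :=
  [|| x == y, star_twins x y && (O x < O y)%N
    | ~~ star_twins x y && (y \in Av x)].

End Graph.

From HB Require Import structures.
From mathcomp Require Import all_boot all_order all_algebra.
From mathcomp Require Import lra.
Import Order.TTheory GRing.Theory Num.Theory.
Local Open Scope ring_scope.

(* Since N[v] is 1-bounded, the absence of a d-bounded (w,c)-balanced
   separator gives G \ N[v] a component of weight above c >= 1/2; components
   are disjoint, so it is the unique such component, namely B_v.  If
   z \in A_x then B_x avoids N[z], hence lies in a component of G \ N[z]
   which is again heavy, i.e. B_x \subset B_z; conversely that inclusion keeps
   z out of B_x and of C_x.  Thus A_x = {z <> x | B_x \subset B_z}, star twins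
   are exactly the vertices with equal B, and <=_A is the reflexive closure of
   the strict lexicographic order "B_x \proper B_y, or B_x = B_y and
   O x < O y". *)

Set Implicit Arguments.
Unset Strict Implicit.
Unset Printing Implicit Defensive.

Section ReflexiveClosure.
Variables (T : eqType) (lt le : rel T).
Hypothesis leE : forall x y, le x y = (x == y) || lt x y.
Hypothesis ltxx : irreflexive lt.
Hypothesis lt_trans : transitive lt.

Lemma reflexive_closure_partial_order :
  [/\ reflexive le, antisymmetric le & transitive le].
Proof.
split=> [x | x y | y x z]; rewrite ?leE ?eqxx //.
- rewrite [y == x]eq_sym; case: eqP => //= _ /andP[ltxy ltyx].
  by have := lt_trans ltxy ltyx; rewrite ltxx.
- move=> /predU1P[-> // | ltxy] /predU1P[<- | ltyz]; first by rewrite ltxy orbT.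
  by rewrite (lt_trans ltxy ltyz) orbT.
Qed.

End ReflexiveClosure.

Section KeyLex.
Variables (T : eqType) (U : finType) (key : T -> {set U}) (O : T -> nat).

Definition key_lex_lt : rel T := fun x y =>
  (key x == key y) && (O x < O y)%N || (key x \proper key y).

Lemma key_lex_lt_irr : irreflexive key_lex_lt.
Proof. by move=> x; rewrite /key_lex_lt ltnn properxx andbF. Qed.

Lemma key_lex_lt_trans : transitive key_lex_lt.
Proof.
move=> y x z; rewrite /key_lex_lt.
case/orP=> [/andP[/eqP-> ltxy] | pxy] /orP[/andP[/eqP<- ltyz] | pyz].
- by rewrite eqxx (ltn_trans ltxy ltyz).
- by rewrite pyz orbT.
- by rewrite pxy orbT.
- by rewrite (proper_trans pxy pyz) orbT.
Qed.

End KeyLex.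

Section Components.
Variables (T : finType) (e : rel T).
Hypothesis esym : symmetric e.
Implicit Types (X Y C D : {set T}) (a b u y : T).

Lemma del_rel_sym X : symmetric (del_rel e X).
Proof. by move=> x y; rewrite /del_rel esym [(x \notin X) && _]andbC. Qed.

Lemma connect_del_rel_notin X a y :
  a \notin X -> connect (del_rel e X) a y -> y \notin X.
Proof.
move=> aX /connectP[p + ->]; elim: p a aX => //= b p IH a _.
by case/andP=> /and3P[_ _ bX]; exact: IH.
Qed.

Lemma components_notin X C u : C \in components e X -> u \in C -> u \notin X.
Proof.
by case/imsetP=> a; rewrite inE => aX -> ; rewrite inE; exact: connect_del_rel_notin.
Qed.

Lemma components_eq X C D u : C \in components e X -> D \in components e X ->
  u \in C -> u \in D -> C = D.
Proof.
have symX := sym_connect_sym (del_rel_sym X).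
case/imsetP=> a _ ->; case/imsetP=> b _ ->; rewrite !inE => au bu.
have ab : connect (del_rel e X) a b by rewrite (connect_trans au) // symX.
apply/setP=> y; rewrite !inE; apply/idP/idP=> [ay | bY]; last exact: connect_trans ab bY.
by rewrite (connect_trans _ ay) // symX.
Qed.

Lemma components_disjoint X C D : C \in components e X -> D \in components e X ->
  C != D -> [disjoint C & D].
Proof.
move=> Cc Dc CD; rewrite disjoints_subset; apply/subsetP=> u uC; rewrite inE.
by apply: contra CD => uD; rewrite (components_eq Cc Dc uC uD).
Qed.

Lemma components_closed X C b u : C \in components e X -> b \in C ->
  u \notin X -> e b u -> u \in C.
Proof.
move=> Cc bC uX ebu; have bX := components_notin Cc bC.
move: Cc bC => /imsetP[a _ ->]; rewrite !inE => ab.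
by apply: connect_trans ab (connect1 _); rewrite /del_rel ebu bX uX.
Qed.

Lemma component_sub_component X Y C : C \in components e X ->
  [disjoint C & Y] -> exists2 D, D \in components e Y & C \subset D.
Proof.
case/imsetP=> a; rewrite inE => aX -> CY.
have notinY u : connect (del_rel e X) a u -> u \notin Y.
  by move=> au; rewrite (disjointFr CY) // inE.
exists [set y | connect (del_rel e Y) a y].
  by apply/imsetP; exists a; rewrite // inE notinY.
apply/subsetP=> y; rewrite !inE => /connectP[p pth ->]; apply/connectP.
exists p => //; have allY : all [predC Y] (a :: p).
  by apply/allP=> u /(path_connect pth); rewrite inE; exact: notinY.
apply: sub_in_path allY pth => u v; rewrite !inE => uY vY /and3P[euv _ _].
by rewrite /del_rel euv uY vY.
Qed.

End Components.

Section Weights.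
Variables (T : finType) (R : realFieldType) (w : T -> R).
Hypothesis w_ge0 : forall x, 0 <= w x.
Implicit Types A B : {set T}.

Lemma wt_ge0 A : 0 <= wt w A.
Proof. exact: sumr_ge0. Qed.

Lemma wt_subset A B : A \subset B -> wt w A <= wt w B.
Proof.
by move=> AB; rewrite [wt w B](big_setID A) (setIidPr AB) lerDl wt_ge0.
Qed.

Lemma wt_disjoint A B : [disjoint A & B] -> wt w A + wt w B <= wt w [set: T].
Proof.
move=> AB; apply: le_trans (wt_subset (subsetT (A :|: B))).
by rewrite /wt -bigU // (eq_bigl (mem (A :|: B))) // => x; rewrite !inE.
Qed.

End Weights.

Section StarSeparation.
Variables (T : finType) (e : rel T) (R : realFieldType) (w : T -> R).
Hypothesis esym : symmetric e.
Hypothesis w_ge0 : forall x, 0 <= w x.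
Hypothesis wT : wt w [set: T] = 1.
Implicit Types (X C D : {set T}) (u v x y z : T).

Lemma light_other_component X C D :
  C \in components e X -> D \in components e X -> C != D ->
  2^-1 < wt w D -> wt w C < 2^-1.
Proof.
move=> Cc Dc CD heavyD.
have := wt_disjoint w_ge0 (components_disjoint esym Cc Dc CD); rewrite wT; lra.
Qed.

Hypothesis heavy : forall v,
  exists2 D, D \in components e (cnbhd e v) & 2^-1 < wt w D.

Lemma Bv_heavy v :
  Bv e w v \in components e (cnbhd e v) /\ 2^-1 < wt w (Bv e w v).
Proof.
have [D Dc heavyD] := heavy v; rewrite /Bv.
case: pickP => [C /andP[Cc /forall_inP maxC] | noC].
  by split; last exact: lt_le_trans heavyD (maxC D Dc).
have /negP[] := noC D; rewrite Dc /=; apply/forall_inP => C Cc.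
have [-> // | CD] := eqVneq C D.
exact/ltW/(lt_trans (light_other_component Cc Dc CD heavyD)).
Qed.

Lemma Bv_unique v D :
  D \in components e (cnbhd e v) -> 2^-1 < wt w D -> D = Bv e w v.
Proof.
move=> Dc heavyD; have [Bc heavyB] := Bv_heavy v.
apply/eqP; apply: contraT => DB.
by have := light_other_component Dc Bc DB heavyB; rewrite ltNge (ltW heavyD).
Qed.

Lemma Bv_cnbhd_disjoint v : [disjoint Bv e w v & cnbhd e v].
Proof.
rewrite disjoints_subset; apply/subsetP=> u uB; rewrite inE.
exact: components_notin (Bv_heavy v).1 uB.
Qed.

Lemma Bv_sub_of_disjoint x z :
  [disjoint Bv e w x & cnbhd e z] -> Bv e w x \subset Bv e w z.
Proof.
move=> Bx_z; have [Bc heavyB] := Bv_heavy x.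
have [D Dc BD] := component_sub_component Bc Bx_z.
by rewrite -(Bv_unique Dc (lt_le_trans heavyB (wt_subset w_ge0 BD))).
Qed.

Lemma Av_cnbhd_disjoint x z : z \in Av e w x -> [disjoint Bv e w x & cnbhd e z].
Proof.
rewrite /Av /Cv /cnbhd /nbhd !inE !negb_or => /and3P[zB zx zC].
rewrite disjoints_subset; apply/subsetP=> u uB; rewrite !inE negb_or.
apply/andP; split; first by apply: contraNneq zB => <-.
apply: contraNN zC => ezu; have [exz | nexz] := boolP (e x z).
  by apply/existsP; exists u; rewrite uB.
have zN : z \notin cnbhd e x by rewrite !inE negb_or zx.
by move: zB; rewrite (components_closed (Bv_heavy x).1 uB zN) // esym.
Qed.

Lemma in_Av x z : (z \in Av e w x) = (z != x) && (Bv e w x \subset Bv e w z).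
Proof.
apply/idP/andP=> [zA | [zx /subsetP Bxz]].
  split; last exact/Bv_sub_of_disjoint/Av_cnbhd_disjoint.
  by move: zA; rewrite /Av /Cv !inE; apply: contraNneq => ->; rewrite eqxx orbT.
have notin_Bz u : u \in cnbhd e z -> u \notin Bv e w x.
  move=> uz; apply: contraL uz => /Bxz uB.
  by rewrite (disjointFr (Bv_cnbhd_disjoint z) uB).
rewrite /Av /Cv !inE (negbTE zx) negb_or notin_Bz ?inE ?eqxx //=.
apply/negP=> /andP[_ /existsP[b /andP[bB ezb]]].
by move: bB; rewrite (negbTE (notin_Bz b _)) // !inE ezb orbT.
Qed.

Lemma Cv_sub_cnbhd x : Cv e w x \subset cnbhd e x.
Proof.
by apply/subsetP=> u; rewrite !inE => /predU1P[-> | /andP[-> _]]; rewrite ?eqxx ?orbT.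
Qed.

Lemma in_Cv x u : (u \in Cv e w x) = (u \notin Bv e w x) && (u \notin Av e w x).
Proof.
rewrite /Av in_setC in_setU negbK; have [uB | //] := boolP (u \in Bv e w x).
apply/negbTE; apply: contraL uB => /(subsetP (Cv_sub_cnbhd x)) uN.
by rewrite (disjointFl (Bv_cnbhd_disjoint x) uN).
Qed.

Lemma AvE x : Av e w x = [set u | Bv e w x \subset Bv e w u] :\ x.
Proof. by apply/setP=> u; rewrite in_Av !inE. Qed.

Lemma CvD1E x :
  Cv e w x :\ x = ~: (Bv e w x :|: [set u | Bv e w x \subset Bv e w u]).
Proof.
apply/setP=> u; rewrite in_setD1 in_Cv in_Av !inE negb_or.
by have [-> | _] := eqVneq u x; rewrite ?subxx ?andbF.
Qed.

Lemma star_twinsE x y : star_twins e w x y = (Bv e w x == Bv e w y).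
Proof.
apply/and3P/eqP=> [[/eqP -> //] | Bxy].
by rewrite /star_twins !CvD1E !AvE Bxy !eqxx setDDl setUC -setDDl.
Qed.

Lemma leAE O x y : leA e w O x y = (x == y) || key_lex_lt (Bv e w) O x y.
Proof.
rewrite /leA star_twinsE in_Av /key_lex_lt properEneq.
by have [-> | xy] := eqVneq x y; rewrite // [y == x]eq_sym xy.
Qed.

End StarSeparation.

Lemma cnbhd_sub_ball (T : finType) (e : rel T) k v :
  (0 < k)%N -> cnbhd e v \subset ball e k v.
Proof.
elim: k => // [[_ _ | k IH _]].
  by apply/subsetP=> u; rewrite !inE => /predU1P[-> | evu]; rewrite ?eqxx //;
    apply/orP; right; apply/existsP; exists v; rewrite inE eqxx.
exact: subset_trans (IH isT) (subsetUl _ _).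
Qed.

Lemma heavy_component_of_unbalanced (T : finType) (e : rel T) (R : realFieldType)
    (w : T -> R) (c : R) (d : nat) :
  (0 < d)%N -> ~ (exists X, bounded e d X /\ balanced_sep e w c X) ->
  forall v, exists2 D, D \in components e (cnbhd e v) & c < wt w D.
Proof.
move=> d_gt0 unbalanced v; apply/exists_inP; apply: contra_notT unbalanced.
move/exists_inPn=> light; exists (cnbhd e v); split.
  by exists v; exact: cnbhd_sub_ball.
by move=> D /light; rewrite -leNgt.
Qed.

Theorem lemma4p3 (R : realFieldType) (c : R) (d delta : nat)
  (T : finType) (e : rel T) (w : T -> R) (O : T -> nat) :
  2^-1 <= c -> c < 1 ->
  (0 < delta)%N -> (0 < d)%N -> (delta <= d)%N ->
  simple_graph e ->
  max_degree e delta ->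
  (forall x, 0 <= w x <= 1) ->
  wt w [set: T] = 1 ->
  ~ (exists X : {set T}, bounded e d X /\ balanced_sep e w c X) ->
  injective O ->
  (forall x, (1 <= O x <= #|T|)%N) ->
  (forall k, (1 <= k <= #|T|)%N -> exists x, O x = k) ->
  [/\ reflexive (leA e w O), antisymmetric (leA e w O)
    & transitive (leA e w O)].
Proof.
move=> half_le_c _ _ d_gt0 _ [esym _] _ w01 wT unbalanced _ _ _.
have w_ge0 x : 0 <= w x by case/andP: (w01 x).
have heavy v : exists2 D, D \in components e (cnbhd e v) & 2^-1 < wt w D.
  have [D Dc cD] := heavy_component_of_unbalanced d_gt0 unbalanced v.
  by exists D; last exact: le_lt_trans cD.
apply: reflexive_closure_partial_order (leAE esym w_ge0 wT heavy O) _ _.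
- exact: key_lex_lt_irr.
- exact: key_lex_lt_trans.
Qed.
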